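(* Let $\Gamma=(V,E)$ be a simple connected graph of order $n$ and maximum degree $\Delta$, and let $\mu$ be the algebraic connectivity of $\Gamma$. Then the strong defensive alliance number of $\Gamma$ satisfies $$\hat{a}(\Gamma)\ge \left\lceil\frac{n\left(\mu-\left\lfloor\frac{\Delta}{2}\right\rfloor\right)}{\mu}\right\rceil.$$
   Context: For $S\subseteq V$ and $v\in V$, $N_S(v)=\{u\in S: u\sim v\}$ and $N_{V\setminus S}(v)=\{u\in V\setminus S: u\sim v\}$. A nonempty set $S\subseteq V$ is a strong defensive alliance if $|N_S(v)|\ge |N_{V\setminus S}(v)|$ for every $v\in S$. $\hat a(\Gamma)$ is the minimum cardinality of a strong defensive alliance in $\Gamma$. The algebraic connectivity is the second smallest eigenvalue of the Laplacian matrix of $\Gamma$. *)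

From HB Require Import structures.
From mathcomp Require Import all_boot all_order all_algebra.
From mathcomp Require Import reals.
Set Implicit Arguments. Unset Strict Implicit. Unset Printing Implicit Defensive.
Import Order.TTheory GRing.Theory Num.Theory.
Local Open Scope ring_scope.

Definition simple_graph (T : finType) (e : rel T) : Prop :=
  symmetric e /\ irreflexive e.

Definition connected_graph (T : finType) (e : rel T) : Prop :=
  forall x y : T, connect e x y.

Definition nbhd_in (T : finType) (e : rel T) (S : {set T}) (v : T) : {set T} :=
  [set u in S | e u v].

Definition deg (T : finType) (e : rel T) (v : T) : nat := #|[set u | e u v]|.

Definition max_deg (T : finType) (e : rel T) : nat := (\max_(v : T) deg e v)%N.

Definition strong_def_alliance (T : finType) (e : rel T) (S : {set T}) : bool :=
  (S != set0) &&
  [forall v in S, (#|nbhd_in e (~: S) v| <= #|nbhd_in e S v|)%N].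

(* minimum cardinality of a strong defensive alliance (V itself is one
   whenever V is nonempty, so the default #|T| is never strictly below the min) *)
Definition alliance_number (T : finType) (e : rel T) : nat :=
  (\big[minn/#|T|]_(S : {set T} | strong_def_alliance e S) #|S|)%N.

Definition laplacian (R : nzRingType) (T : finType) (e : rel T) : 'M[R]_#|T| :=
  \matrix_(i, j) (if i == j then (deg e (enum_val i))%:R
                  else if e (enum_val i) (enum_val j) then -1 else 0).

Definition laplacian_spectrum (R : realType) (T : finType) (e : rel T)
  (s : seq R) : Prop :=
  sorted <=%R s /\
  char_poly (laplacian R e) = \prod_(x <- s) ('X - x%:P).

(* algebraic connectivity = second smallest Laplacian eigenvalue *)
Definition alg_connectivity (R : realType) (s : seq R) : R := s`_1.

From HB Require Import structures.
From mathcomp Require Import all_boot all_order all_algebra.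
From mathcomp Require Import reals complex ring lra.
Set Implicit Arguments. Unset Strict Implicit. Unset Printing Implicit Defensive.
Import Order.TTheory GRing.Theory Num.Theory.
Local Open Scope ring_scope.
Local Open Scope sesquilinear_scope.

(* Fiedler's bound: if S has k of the n vertices, then mu k (n - k) <= n e(S, V \ S).
   It is the Rayleigh-quotient bound for the second Laplacian eigenvalue applied to the
   vector equal to n - k on S and to -k off S, which is orthogonal to the constants
   spanning the kernel.  In a strong defensive alliance every vertex of S has at most
   floor(Delta/2) neighbours outside S, so e(S, V \ S) <= k floor(Delta/2).  Hence
   mu (n - k) <= n floor(Delta/2), i.e. k >= n (mu - floor(Delta/2)) / mu. *)

Local Notation "''[' u , v ]" := (dotmx u v) : ring_scope.
Local Notation "''[' u ]" := (dotmx u u) : ring_scope.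

Lemma char_poly_similar (F : fieldType) n (P A : 'M[F]_n) : P \in unitmx ->
  char_poly (invmx P *m A *m P) = char_poly A.
Proof.
move=> Punit; rewrite /char_poly /char_poly_mx.
have -> : 'X%:M - map_mx polyC (invmx P *m A *m P) =
    map_mx polyC (invmx P) *m ('X%:M - map_mx polyC A) *m map_mx polyC P.
  rewrite mulmxBr mulmxBl !map_mxM; congr (_ - _).
  by rewrite mul_mx_scalar -scalemxAl -map_mxM mulVmx // map_mx1 scalemx1.
rewrite !det_mulmx !det_map_mx mulrC mulrA -rmorphM -det_mulmx mulmxV //.
by rewrite det1 rmorph1 mul1r.
Qed.

Lemma trmxC_mul (C : numClosedFieldType) m n p (X : 'M[C]_(m, n)) (Y : 'M[C]_(n, p)) :
  (X *m Y)^t* = Y^t* *m X^t*.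
Proof. by rewrite trmx_mul map_mxM. Qed.

Section HermitianRayleigh.

Variables (C : numClosedFieldType) (n : nat) (A : 'M[C]_n).
Hypothesis hermA : A \is hermsymmx.

Local Notation P := (spectralmx A).
Local Notation D := (spectral_diag A).

Lemma hermitian_spectral_decomposition : A = P^t* *m diag_mx D *m P.
Proof.
rewrite -invmx_unitary ?spectral_unitarymx //.
exact/orthomx_spectralP/hermitian_normalmx.
Qed.

Lemma hermitian_char_poly : char_poly A = \prod_(i < n) ('X - (D 0 i)%:P).
Proof.
rewrite [in LHS]hermitian_spectral_decomposition.
rewrite -invmx_unitary ?spectral_unitarymx // char_poly_similar ?spectral_unit //.
rewrite char_poly_trig ?diag_mx_is_trig //.
by apply: eq_bigr => i _; rewrite mxE eqxx mulr1n.
Qed.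

Lemma hermitian_spectrum_perm_eq (s : seq C) :
  char_poly A = \prod_(y <- s) ('X - y%:P) -> perm_eq s [seq D 0 i | i <- enum 'I_n].
Proof.
by move=> As; apply: prod_XsubC_eq; rewrite -As hermitian_char_poly big_map big_enum.
Qed.

Lemma spectral_normE (z : 'rV[C]_n) :
  (z *m z^t*) 0 0 = \sum_i `|(z *m P^t*) 0 i| ^+ 2.
Proof.
have PtP : P^t* *m P = 1%:M.
  by rewrite -invmx_unitary ?spectral_unitarymx // mulVmx ?spectral_unit.
have -> : z *m z^t* = (z *m P^t*) *m (z *m P^t*)^t*.
  by rewrite trmxC_mul trmxCK mulmxA -(mulmxA z) PtP mulmx1.
by rewrite mxE; apply: eq_bigr => i _; rewrite normCK !mxE.
Qed.

Lemma spectral_quadE (z : 'rV[C]_n) :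
  (z *m A *m z^t*) 0 0 = \sum_i D 0 i * `|(z *m P^t*) 0 i| ^+ 2.
Proof.
have -> : z *m A *m z^t* = (z *m P^t*) *m diag_mx D *m (z *m P^t*)^t*.
  by rewrite [X in z *m X]hermitian_spectral_decomposition trmxC_mul trmxCK !mulmxA.
rewrite mxE; apply: eq_bigr => i _.
by rewrite mul_mx_diag !mxE normCK mulrAC mulrC.
Qed.

Lemma hermitian_adjoint (x y : 'rV[C]_n) : '[x *m A, y] = '[x, y *m A].
Proof.
have AtA : A^t* = A.
  by have /is_hermitianmxP := hermA; rewrite expr0 scale1r => {2}->.
by rewrite !dotmxE trmxC_mul AtA mulmxA.
Qed.

Lemma rayleigh_ge_spectral (mu : C) (z : 'rV[C]_n) :
  (forall i, ~~ (mu <= D 0 i) -> (z *m P^t*) 0 i = 0) ->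
  mu * '[z] <= '[z *m A, z].
Proof.
move=> zP; rewrite !dotmxE spectral_quadE spectral_normE mulr_sumr.
apply: ler_sum => i _; have [muD | /zP ->] := boolP (mu <= D 0 i).
  by rewrite ler_wpM2r ?exprn_ge0.
by rewrite normr0 expr0n !mulr0.
Qed.

Theorem rayleigh_second_eigenvalue (s : seq C) (mu : C) (u x : 'rV[C]_n) :
  char_poly A = \prod_(y <- s) ('X - y%:P) ->
  (count (fun y => ~~ (mu <= y)%R) s <= 1)%N ->
  0 < mu -> u != 0 -> u *m A = 0 -> '[x, u] = 0 ->
  mu * '[x] <= '[x *m A, x].
Proof.
move=> As s_small mu_gt0 u_neq0 uA0 xu0.
have small_le1 : (#|[pred i | ~~ (mu <= D 0 i)%R]| <= 1)%N.
  rewrite cardE /enum_mem size_filter -enumT.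
  by move: s_small; rewrite (permP (hermitian_spectrum_perm_eq As)) count_map.
have [i0 i0_small | no_small] := pickP [pred i | ~~ (mu <= D 0 i)]; last first.
  by apply: rayleigh_ge_spectral => i; rewrite [~~ _]no_small.
have only_i0 i : ~~ (mu <= D 0 i) -> i = i0.
  by move=> i_small; apply: (card_le1_eqP small_le1).
(* u has a nonzero coordinate on the only eigenvector with eigenvalue below mu, since
   otherwise 0 = '[u A, u] >= mu '[u] > 0; subtracting a multiple of u kills the
   coordinate of x there without changing the quadratic form and only raises the norm. *)
have u_i0 : (u *m P^t*) 0 i0 != 0.
  apply/eqP => u_i0; have : mu * '[u] <= '[u *m A, u].
    by apply: rayleigh_ge_spectral => i /only_i0 ->.
  by rewrite uA0 linear0l lt_geF // mulr_gt0 // dnorm_gt0.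
pose a := (x *m P^t*) 0 i0 / (u *m P^t*) 0 i0.
pose z := x - a *: u.
have zA : z *m A = x *m A by rewrite mulmxBl -scalemxAl uA0 scaler0 subr0.
have quad_z : '[z *m A, z] = '[x *m A, x].
  by rewrite zA linearBr linearZr_LR /= (hermitian_adjoint x u) uA0 linear0r mulr0 subr0.
have norm_z : '[z] = '[x] + `|a| ^+ 2 * '[u].
  by rewrite dnormB dnormZ linearZr_LR /= xu0 mulr0 conjC0 addr0 subr0.
have : mu * '[z] <= '[z *m A, z].
  apply: rayleigh_ge_spectral => i /only_i0 ->.
  rewrite mulmxBl -scalemxAl; set wx := x *m _; set wu := u *m _.
  have -> : (wx - a *: wu) 0 i0 = wx 0 i0 - a * wu 0 i0 by rewrite !mxE.
  by rewrite divfK // subrr.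
rewrite quad_z norm_z; apply: le_trans; rewrite ler_wpM2l ?(ltW mu_gt0) //.
by rewrite lerDl mulr_ge0 ?exprn_ge0 ?dnorm_ge0.
Qed.

End HermitianRayleigh.

Lemma sum_enum_rank (V : nmodType) (T : finType) (F : 'I_#|T| -> V) :
  \sum_i F i = \sum_t F (enum_rank t).
Proof. by rewrite (reindex enum_rank) //; apply/onW_bij/enum_rank_bij. Qed.

Definition row_fun (R : Type) (T : finType) (f : T -> R) : 'rV[R]_#|T| :=
  \row_i f (enum_val i).

Lemma row_fun_dotE (R : comNzRingType) (T : finType) (f g : T -> R) :
  (row_fun f *m (row_fun g)^T) 0 0 = \sum_t f t * g t.
Proof. by rewrite mxE sum_enum_rank; apply: eq_bigr => t _; rewrite !mxE enum_rankK. Qed.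

Definition cut_size (T : finType) (e : rel T) (S : {set T}) : nat :=
  \sum_(t in S) #|nbhd_in e (~: S) t|.

Section Laplacian.

Variables (T : finType) (e : rel T).
Hypotheses (e_sym : symmetric e) (e_irr : irreflexive e).

Lemma laplacian_sym (R : nzRingType) : (laplacian R e)^T = laplacian R e.
Proof. by apply/matrixP => i j; rewrite !mxE eq_sym e_sym; case: eqP => // ->. Qed.

Lemma laplacian_mul_row_fun (R : nzRingType) (g : T -> R) (i : 'I_#|T|) :
  (laplacian R e *m (row_fun g)^T) i 0 =
  \sum_(u | e (enum_val i) u) (g (enum_val i) - g u).
Proof.
set v := enum_val i; rewrite mxE sum_enum_rank.
rewrite (eq_bigr (fun u => laplacian R e i (enum_rank u) * g u)); last first.
  by move=> u _; rewrite !mxE enum_rankK.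
rewrite (bigD1 v) //= sumrB; congr (_ + _).
  rewrite mxE /v enum_valK eqxx sumr_const mulr_natl /deg; congr (_ *+ _).
  by apply: eq_card => u; rewrite !inE e_sym.
have i_neq u : u != v -> (i == enum_rank u) = false.
  by apply: contraNF => /eqP i_eq; rewrite /v i_eq enum_rankK.
rewrite -sumrN (bigID (e v)) /= addrC big1 ?add0r => [|u /andP[/i_neq iu /negbTE evu]].
  apply: eq_big => [u|u /andP[/i_neq iu evu]].
    by case: eqVneq => [->|]; rewrite ?e_irr.
  by rewrite mxE enum_rankK iu evu mulN1r.
by rewrite mxE enum_rankK iu evu mul0r.
Qed.

Lemma laplacian_quadE (R : comNzRingType) (f g : T -> R) :
  (row_fun f *m laplacian R e *m (row_fun g)^T) 0 0 =
  \sum_t f t * \sum_(u | e t u) (g t - g u).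
Proof.
rewrite -mulmxA mxE sum_enum_rank; apply: eq_bigr => t _.
by rewrite laplacian_mul_row_fun mxE !enum_rankK.
Qed.

Lemma laplacian_quad_sqr (R : comNzRingType) (f : T -> R) :
  (\sum_t f t * \sum_(u | e t u) (f t - f u)) *+ 2 =
  \sum_t \sum_(u | e t u) (f t - f u) ^+ 2.
Proof.
under eq_bigr do rewrite mulr_sumr.
have swap : \sum_t \sum_(u | e t u) f t * (f t - f u) =
            \sum_t \sum_(u | e t u) f u * (f u - f t).
  rewrite (exchange_big_dep predT) //=; apply: eq_bigr => t _.
  by apply: eq_bigl => u; rewrite e_sym.
rewrite mulr2n {2}swap -big_split; apply: eq_bigr => t _ /=.
by rewrite -big_split; apply: eq_bigr => u _ /=; ring.
Qed.

Lemma laplacian_quad_indicator (R : nzRingType) (S : {set T}) :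
  \sum_t (t \in S)%:R * \sum_(u | e t u) ((t \in S)%:R - (u \in S)%:R) =
  (cut_size e S)%:R :> R.
Proof.
rewrite /cut_size natr_sum [RHS]big_mkcond /=; apply: eq_bigr => t _.
case: (t \in S); rewrite ?mul0r // mul1r.
rewrite /nbhd_in -sum1_card natr_sum [RHS]big_mkcond [LHS]big_mkcond /=.
apply: eq_bigr => u _; rewrite !inE e_sym.
by case: (e u t); case: (u \in S); rewrite ?subrr ?subr0.
Qed.

Lemma laplacian_quad_two_valued (R : numDomainType) (S : {set T}) (a b : R) :
  let f t := if t \in S then a else b in
  \sum_t f t * \sum_(u | e t u) (f t - f u) = (a - b) ^+ 2 * (cut_size e S)%:R.
Proof.
move=> f; apply: (pmulrnI (ltn0Sn 1)) => /=.
rewrite -mulrnAr -(laplacian_quad_indicator R S) !laplacian_quad_sqr mulr_sumr.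
apply: eq_bigr => t _; rewrite mulr_sumr; apply: eq_bigr => u _.
by rewrite /f; case: (t \in S); case: (u \in S) => /=; ring.
Qed.

Lemma laplacian_const_row (R : comNzRingType) :
  (const_mx 1 : 'rV[R]_#|T|) *m laplacian R e = 0.
Proof.
apply: trmx_inj; rewrite trmx_mul laplacian_sym trmx0.
have -> : (const_mx 1 : 'rV[R]_#|T|) = row_fun (fun=> 1) by apply/rowP => i; rewrite !mxE.
by apply/colP => i; rewrite laplacian_mul_row_fun mxE big1 // => u _; rewrite subrr.
Qed.

Lemma laplacian_hermitian (C : numClosedFieldType) : laplacian C e \is hermsymmx.
Proof.
apply/is_hermitianmxP; rewrite expr0 scale1r.
apply/matrixP => i j; rewrite !mxE eq_sym e_sym.
case: eqP => [->|_]; first by rewrite conjC_nat.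
by case: ifP => _; rewrite ?rmorphN1 ?rmorph0.
Qed.

Lemma laplacian_eigenvalue_ge0 (R : realFieldType) (a : R) :
  root (char_poly (laplacian R e)) a -> 0 <= a.
Proof.
rewrite -eigenvalue_root_char => /eigenvalueP [v vL v_neq0].
pose g t := v 0 (enum_rank t).
have vE : v = row_fun g by apply/rowP => i; rewrite !mxE /g enum_valK.
have quad : (v *m laplacian R e *m v^T) 0 0 = a * (v *m v^T) 0 0.
  by rewrite vL -scalemxAl mxE.
have quad_ge0 : 0 <= (v *m laplacian R e *m v^T) 0 0.
  rewrite vE laplacian_quadE -(pmulrn_lge0 _ (ltn0Sn 1)) laplacian_quad_sqr.
  by apply: sumr_ge0 => t _; apply: sumr_ge0 => u _; apply: sqr_ge0.
have norm_gt0 : 0 < (v *m v^T) 0 0.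
  rewrite vE row_fun_dotE; under eq_bigr do rewrite -expr2.
  rewrite lt_def sumr_ge0 ?andbT => [|t _]; last exact: sqr_ge0.
  apply: contra v_neq0 => /eqP /(psumr_eq0P (fun t _ => sqr_ge0 (g t))) g0.
  apply/eqP/rowP => i; move/eqP: (g0 (enum_val i) isT); rewrite sqrf_eq0 => /eqP.
  by rewrite mxE /g enum_valK.
by move: quad_ge0; rewrite quad pmulr_lge0.
Qed.

End Laplacian.

Lemma map_laplacian (R1 R2 : nzRingType) (f : {rmorphism R1 -> R2}) (T : finType)
    (e : rel T) :
  map_mx f (laplacian R1 e) = laplacian R2 e.
Proof.
apply/matrixP => i j; rewrite !mxE; case: ifP => _; first by rewrite rmorph_nat.
by case: ifP => _; rewrite ?rmorphN1 ?rmorph0.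
Qed.

Lemma alg_connectivity_ge0 (R : realType) (T : finType) (e : rel T) (s : seq R) :
  simple_graph e -> laplacian_spectrum e s -> 0 <= alg_connectivity s.
Proof.
move=> [e_sym e_irr] [s_sorted Ls]; rewrite /alg_connectivity.
case: s s_sorted Ls => [|a [|b t]] //= /andP[ab _] Ls; apply: le_trans ab.
by apply: laplacian_eigenvalue_ge0 => //; rewrite Ls root_prod_XsubC mem_head.
Qed.

Lemma count_lt_second_sorted (R : realDomainType) (s : seq R) :
  sorted <=%R s -> (count (fun y => y < s`_1)%R s <= 1)%N.
Proof.
case: s => [|a [|b t]] //=; first by case: (a < 0).
move=> /andP[_ bt]; have := order_path_min le_trans bt.
rewrite ltxx add0n => /allP b_le; rewrite (eq_in_count (a2 := pred0)) ?count_pred0.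
  by rewrite addn0 leq_b1.
by move=> y /b_le; rewrite /= leNgt => /negbTE.
Qed.

Lemma dotmx_real_complex (R : rcfType) m (y z : 'rV[R]_m) (M : 'M[R]_m) :
  '[map_mx (real_complex R) y *m map_mx (real_complex R) M, map_mx (real_complex R) z]
  = ((y *m M *m z^T) 0 0)%:C%C.
Proof.
rewrite dotmxE; have -> : (map_mx (real_complex R) z)^t* = map_mx (real_complex R) z^T.
  by apply/matrixP => i j; rewrite !mxE; apply: conjc_real.
by rewrite -!map_mxM mxE.
Qed.

Lemma fiedler_rayleigh (R : realType) (T : finType) (e : rel T) (s : seq R)
    (f : T -> R) :
  simple_graph e -> laplacian_spectrum e s -> 0 < alg_connectivity s ->
  \sum_t f t = 0 ->
  alg_connectivity s * \sum_t f t ^+ 2 <= \sum_t f t * \sum_(u | e t u) (f t - f u).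
Proof.
move=> [e_sym e_irr] [s_sorted Ls] mu_gt0 f_sum0.
have [t0 _ | T0] := pickP (@predT T); last by rewrite !big_pred0 ?mulr0.
set mu := alg_connectivity s.
(* The spectral theorem is available over numClosedFieldType: complexify. *)
pose x := map_mx (real_complex R) (row_fun f).
pose one := map_mx (real_complex R) (const_mx 1 : 'rV[R]_#|T|).
have LC : laplacian R[i] e = map_mx (real_complex R) (laplacian R e) by rewrite map_laplacian.
have charC : char_poly (laplacian R[i] e) = \prod_(y <- map (real_complex R) s) ('X - y%:P).
  by rewrite LC -map_char_poly Ls map_prod_XsubC big_map.
have few_small : (count (fun y => ~~ (mu%:C%C <= y)%R) (map (real_complex R) s) <= 1)%N.
  rewrite count_map (eq_count (a2 := fun y => y < s`_1)); first exact: count_lt_second_sorted.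
  by move=> y /=; rewrite lecR -ltNge.
have one_neq0 : one != 0.
  apply/eqP => /rowP /(_ (enum_rank t0)); rewrite !mxE rmorph1; exact/eqP/oner_neq0.
have oneL : one *m laplacian R[i] e = 0.
  by rewrite /one map_const_mx rmorph1 laplacian_const_row.
have x_one : '[x, one] = 0.
  rewrite -[x]mulmx1 -(map_mx1 (real_complex R)) dotmx_real_complex mulmx1.
  have -> : (const_mx 1 : 'rV[R]_#|T|) = row_fun (fun=> 1) by apply/rowP => i; rewrite !mxE.
  by rewrite row_fun_dotE (eq_bigr _ (fun t _ => mulr1 (f t))) f_sum0.
have norm_x : '[x] = (\sum_t f t ^+ 2)%:C%C.
  rewrite -[x in dotmx x]mulmx1 -(map_mx1 (real_complex R)) dotmx_real_complex.
  by rewrite mulmx1 row_fun_dotE; under eq_bigr do rewrite -expr2.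
have quad_x :
    '[x *m laplacian R[i] e, x] = (\sum_t f t * \sum_(u | e t u) (f t - f u))%:C%C.
  by rewrite LC dotmx_real_complex laplacian_quadE.
have := rayleigh_second_eigenvalue (u := one) (x := x)
  (laplacian_hermitian e_sym R[i]) charC few_small.
by rewrite ltcR norm_x quad_x -rmorphM lecR; apply.
Qed.

Lemma sum_two_valued (R : pzSemiRingType) (T : finType) (S : {set T}) (F : T -> R)
    (a b : R) :
  (forall t, F t = if t \in S then a else b) ->
  \sum_t F t = a * #|S|%:R + b * (#|T| - #|S|)%:R.
Proof.
move=> FE; rewrite (bigID (mem S)) /=.
rewrite (eq_bigr (fun=> a)) => [|t tS]; last by rewrite FE tS.
rewrite [X in _ + X](eq_bigr (fun=> b)) => [|t /negbTE tS]; last by rewrite FE tS.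
by rewrite !sumr_const -(cardC S) addKn !mulr_natr.
Qed.

Lemma fiedler_cut_bound (R : realType) (T : finType) (e : rel T) (s : seq R)
    (S : {set T}) :
  simple_graph e -> laplacian_spectrum e s -> 0 < alg_connectivity s ->
  alg_connectivity s * (#|S| * (#|T| - #|S|))%:R <= (#|T| * cut_size e S)%:R.
Proof.
move=> sg Ls mu_gt0; set n := #|T|; set k := #|S|; set mu := alg_connectivity s.
have [n0 | n_gt0] := posnP n.
  by rewrite n0 sub0n muln0 mulr0 ler0n.
have k_le_n : (k <= n)%N := max_card S.
pose f t : R := if t \in S then n%:R - k%:R else - k%:R.
have sum_f : \sum_t f t = 0.
  by rewrite (@sum_two_valued _ _ S f _ _ (fun=> erefl)) // natrB //; ring.
have sum_f2 : \sum_t f t ^+ 2 = (k * (n - k))%:R * n%:R.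
  rewrite (@sum_two_valued _ _ S _ ((n%:R - k%:R) ^+ 2) ((- k%:R) ^+ 2)); last first.
    by move=> t; rewrite /f; case: (t \in S).
  by rewrite natrM natrB //; ring.
have quad_f : \sum_t f t * \sum_(u | e t u) (f t - f u) = n%:R * (n * cut_size e S)%:R.
  by case: sg => e_sym e_irr; rewrite laplacian_quad_two_valued // natrM; ring.
have := fiedler_rayleigh sg Ls mu_gt0 sum_f.
by rewrite sum_f2 quad_f -/mu mulrA [X in _ <= X]mulrC ler_pM2r ?ltr0n.
Qed.

Lemma deg_nbhd_split (T : finType) (e : rel T) (S : {set T}) (t : T) :
  (#|nbhd_in e S t| + #|nbhd_in e (~: S) t|)%N = deg e t.
Proof.
rewrite /deg -(cardsID S [set u | e u t]); congr (_ + _)%N; apply: eq_card => u.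
  by rewrite !inE andbC.
by rewrite !inE.
Qed.

Lemma alliance_out_nbhd_le (T : finType) (e : rel T) (S : {set T}) (t : T) :
  strong_def_alliance e S -> t \in S ->
  (#|nbhd_in e (~: S) t| <= (max_deg e)./2)%N.
Proof.
move=> /andP[_ /forall_inP out_le_in] tS; rewrite geq_half_double -addnn.
apply: leq_trans (leq_bigmax t); rewrite -(deg_nbhd_split e S) leq_add2r.
exact: out_le_in.
Qed.

Lemma cut_size_alliance_le (T : finType) (e : rel T) (S : {set T}) :
  strong_def_alliance e S -> (cut_size e S <= #|S| * (max_deg e)./2)%N.
Proof.
move=> allS; rewrite /cut_size -sum_nat_const; apply: leq_sum => t tS.
exact: alliance_out_nbhd_le.
Qed.

Lemma alliance_number_ge (T : finType) (e : rel T) (m : int) :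
  m <= #|T|%:Z -> (forall S, strong_def_alliance e S -> m <= #|S|%:Z) ->
  m <= (alliance_number e)%:Z.
Proof.
move=> m_le_T m_le_S; rewrite /alliance_number.
elim/big_ind: _ => // x y m_le_x m_le_y.
by rewrite /minn; case: ifP.
Qed.

Lemma alliance_card_lower_bound (R : realType) (T : finType) (e : rel T) (s : seq R)
    (S : {set T}) :
  simple_graph e -> laplacian_spectrum e s -> 0 < alg_connectivity s ->
  strong_def_alliance e S ->
  #|T|%:R * (alg_connectivity s - ((max_deg e)./2)%:R) <= alg_connectivity s * #|S|%:R.
Proof.
move=> sg Ls mu_gt0 allS; set mu := alg_connectivity s.
have k_pos : 0 < #|S|%:R :> R by rewrite ltr0n card_gt0; case/andP: allS.
have cut_le : (cut_size e S)%:R <= #|S|%:R * ((max_deg e)./2)%:R :> R.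
  by rewrite -natrM ler_nat cut_size_alliance_le.
have fiedler := fiedler_cut_bound S sg Ls mu_gt0.
rewrite -/mu !natrM natrB ?max_card // in fiedler.
have := le_trans fiedler (ler_wpM2l (ler0n R #|T|) cut_le) => key.
by rewrite -subr_ge0 -(pmulr_rge0 _ k_pos); lra.
Qed.

Theorem theorem2 (R : realType) (T : finType) (e : rel T) (s : seq R) :
  simple_graph e -> connected_graph e ->
  laplacian_spectrum e s ->
  let n := #|T| in
  let mu := alg_connectivity s in
  Num.ceil ((n%:R * (mu - ((max_deg e)./2)%:R)) / mu)
    <= (alliance_number e)%:Z.
Proof.
move=> sg _ Ls /=; set n := #|T|; set mu := alg_connectivity s.
(* For mu = 0 the bound is 0 since 0^-1 = 0; connectivity (forcing mu > 0) is unneeded. *)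
have := alg_connectivity_ge0 sg Ls; rewrite le0r => /orP[/eqP mu0 | mu_gt0].
  by rewrite /mu mu0 invr0 mulr0 ceil0.
apply: alliance_number_ge => [|S allS]; rewrite ceil_le_int ler_pdivrMr // -pmulrn.
  by rewrite ler_wpM2l ?ler0n // gerBl ler0n.
by rewrite [X in _ <= X]mulrC; apply: alliance_card_lower_bound.
Qed.
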